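(* Let $1\le K<d$ be integers, $T_\lambda$ as below, $u_\lambda$ the minimal solution in $[1,\infty)$ of $T_\lambda(u)=u$ (which exists for $\lambda$ in a left neighbourhood of $1$), and $h_\lambda(x)=\frac{u_\lambda-T_\lambda(u_\lambda-x)}{x}$. There exist $\tilde\lambda<1$ and $b\in\mathbb N$ (independent of $\lambda$) such that for all $\lambda\in(\tilde\lambda,1)$ the function $h_\lambda$ is decreasing on $[u_\lambda-\lambda^b,u_\lambda]$.
   Context: $T_\lambda(u)=\frac{\lambda}{K}\sum_{j=0}^{K-1}(K-j)\binom{d}{j}u^{d-j}(1-u)^j$ for $u\in[0,\infty)$, $\lambda\in(0,1)$. *)

From Stdlib Require Import Reals.
Open Scope R_scope.

(* T_lambda(u) = lambda/K * sum_{j=0}^{K-1} (K-j) C(d,j) u^(d-j) (1-u)^j.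
   sum_f_R0 f (K-1) = f 0 + ... + f (K-1); K >= 1 is assumed in the theorem. *)
Definition T (K d : nat) (lam u : R) : R :=
  lam / INR K *
  sum_f_R0 (fun j => INR (K - j) * Binomial.C d j * u ^ (d - j) * (1 - u) ^ j) (K - 1).

Definition is_min_fixpoint (K d : nat) (lam u : R) : Prop :=
  1 <= u /\ T K d lam u = u /\ (forall v, 1 <= v < u -> T K d lam v <> v).

Definition h (K d : nat) (lam u x : R) : R :=
  (u - T K d lam (u - x)) / x.

From Stdlib Require Import Reals Lra Lia.
Open Scope R_scope.

(* Write K = k + 1 and d = m + 2.  Summation by parts turns T_lambda into
   (lambda / K) * sum_{i < K} F_{d,i}, where F_{n,i}(s) = sum_{j <= i} C(n,j) s^(n-j) (1-s)^j
   is a binomial distribution function; the derivatives of the Bernstein terms telescope, so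
   T_lambda' = (lambda d / K) F, with F = F_{m+1,k} and F'(s) = (m+1) C(m,k) s^(m-k) (1-s)^k.
   Hence F increases on [0,1] up to F(1) = 1, is at least 1 - O(e^(k+1)) on [1, 1+e], and
   F(1 - delta) <= 1 - c delta^(k+1).

   Since T_lambda(u) = u, h_lambda(x) is the mean slope of T_lambda over [u - x, u]; by the mean
   value theorem it decreases on [u - c, u] as soon as T_lambda' on [0, c] lies below T_lambda'
   further right up to u (mean_slope_decreasing).  For lambda = 1 - x0 near 1, T_lambda(t) - t
   has slope >= 3/(8K) on [1, 1 + eta], eta = 4 K x0, which traps u_lambda in this window
   (least_fixpoint_window); and for b = 16 K 4^(m-k), lambda^b <= 1 - b x0 / 2 lies so far below 1
   that F on [0, lambda^b] is below F on the whole window (cdf_separation). *)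

(* The terms of T: [bern n j s] is the probability that a Binomial(n, 1 - s)
   variable equals j, and [bern_cdf n k s] the probability that it is <= k. *)
Definition bern (n j : nat) (s : R) : R := Binomial.C n j * s ^ (n - j) * (1 - s) ^ j.
Definition bern_cdf (n k : nat) (s : R) : R := sum_f_R0 (fun j => bern n j s) k.

Lemma sum_weighted_as_partial_sums (b : nat -> R) (k : nat) :
  sum_f_R0 (fun j => INR (S k - j) * b j) k = sum_f_R0 (fun i => sum_f_R0 b i) k.
Proof.
  induction k as [|k IHk].
  - simpl. ring.
  - rewrite (tech5 (fun i => sum_f_R0 b i)), <- IHk.
    rewrite (sum_eq (fun j => INR (S (S k) - j) * b j) (fun j => INR (S k - j) * b j + b j)).
    + rewrite plus_sum, tech5, (tech5 b), Nat.sub_diag. simpl INR. ring.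
    + intros i Hi. replace (S (S k) - i)%nat with (S (S k - i)) by lia. rewrite S_INR. ring.
Qed.

Lemma T_as_cdf_sum (K d : nat) (lam u : R) : (1 <= K)%nat ->
  T K d lam u = lam / INR K * sum_f_R0 (fun i => bern_cdf d i u) (K - 1).
Proof.
  intros HK. unfold T, bern_cdf. destruct K as [|k]; [lia|].
  replace (S k - 1)%nat with k by lia. rewrite <- sum_weighted_as_partial_sums.
  f_equal. apply sum_eq. intros i _. unfold bern. ring.
Qed.

Lemma binomial_n_0 (n : nat) : Binomial.C n 0 = 1.
Proof.
  unfold Binomial.C. rewrite Nat.sub_0_r. simpl (Factorial.fact 0). simpl INR.
  pose proof (INR_fact_lt_0 n). field. lra.
Qed.

(* At s = 1 only the j = 0 term survives, so every distribution function equals 1. *)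
Lemma bern_cdf_at_1 (n k : nat) : bern_cdf n k 1 = 1.
Proof.
  unfold bern_cdf, bern. induction k as [|k IHk]; simpl sum_f_R0.
  - rewrite binomial_n_0, pow1. ring.
  - rewrite IHk, Rminus_diag. simpl. ring.
Qed.

(* Consequently T_lambda(1) = lambda < 1: the point 1 lies below the diagonal. *)
Lemma T_at_1 (K d : nat) (lam : R) : (1 <= K)%nat -> T K d lam 1 = lam.
Proof.
  intros HK. rewrite T_as_cdf_sum by exact HK.
  rewrite (sum_eq _ (fun _ => 1)) by (intros; apply bern_cdf_at_1).
  rewrite sum_cte. replace (S (K - 1)) with K by lia.
  assert (0 < INR K) by (apply lt_0_INR; lia). field. lra.
Qed.

Lemma derivable_pt_lim_one_minus_pow (n : nat) (x : R) :
  derivable_pt_lim (fun y => (1 - y) ^ n) x (- (INR n * (1 - x) ^ pred n)).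
Proof.
  assert (Hlin : derivable_pt_lim (fun y => 1 - y) x (0 - 1)).
  { exact (derivable_pt_lim_minus (fct_cte 1) id x 0 1
             (derivable_pt_lim_const 1 x) (derivable_pt_lim_id x)). }
  pose proof (derivable_pt_lim_comp _ _ x _ _ Hlin (derivable_pt_lim_pow (1 - x) n)) as Hc.
  replace (- (INR n * (1 - x) ^ pred n)) with (INR n * (1 - x) ^ pred n * (0 - 1)) by ring.
  exact Hc.
Qed.

Lemma derivable_pt_lim_sum_f_R0 (f : nat -> R -> R) (f' : nat -> R) (N : nat) (x : R) :
  (forall i, (i <= N)%nat -> derivable_pt_lim (f i) x (f' i)) ->
  derivable_pt_lim (fun y => sum_f_R0 (fun i => f i y) N) x (sum_f_R0 f' N).
Proof.
  induction N as [|N IHN]; intros Hf; simpl.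
  - apply Hf. lia.
  - apply derivable_pt_lim_plus; [apply IHN; intros i Hi|]; apply Hf; lia.
Qed.

(* The absorption identities (k+1) C(m+1,k+1) = (m+1) C(m,k) and
   (m-k) C(m+1,k+1) = (m+1) C(m,k+1), which make the derivatives telescope. *)
Lemma binomial_absorb_low (m k : nat) : (k <= m)%nat ->
  Binomial.C (S m) (S k) * INR (S k) = INR (S m) * Binomial.C m k.
Proof.
  intros Hk. unfold Binomial.C. replace (S m - S k)%nat with (m - k)%nat by lia.
  rewrite !fact_simpl, !mult_INR.
  field. repeat split; try apply INR_fact_neq_0; apply not_0_INR; lia.
Qed.

Lemma binomial_absorb_high (m k : nat) : (k < m)%nat ->
  Binomial.C (S m) (S k) * INR (m - k) = INR (S m) * Binomial.C m (S k).
Proof.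
  intros Hk. unfold Binomial.C. replace (S m - S k)%nat with (m - k)%nat by lia.
  replace (m - k)%nat with (S (m - S k)) by lia.
  rewrite !fact_simpl, !mult_INR.
  field. repeat split; try apply INR_fact_neq_0; apply not_0_INR; lia.
Qed.

Lemma bern_deriv_first (m : nat) (s : R) :
  derivable_pt_lim (bern (S m) 0) s (INR (S m) * bern m 0 s).
Proof.
  apply (derivable_pt_lim_ext (fun y => y ^ S m)).
  { intros y. unfold bern. rewrite binomial_n_0, Nat.sub_0_r. ring. }
  replace (INR (S m) * bern m 0 s) with (INR (S m) * s ^ pred (S m))
    by (unfold bern; rewrite binomial_n_0, Nat.sub_0_r; simpl; ring).
  apply derivable_pt_lim_pow.
Qed.

Lemma bern_deriv_step (m k : nat) (s : R) : (k < m)%nat ->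
  derivable_pt_lim (bern (S m) (S k)) s (INR (S m) * (bern m (S k) s - bern m k s)).
Proof.
  intros Hk. set (c := Binomial.C (S m) (S k)).
  apply (derivable_pt_lim_ext (fun y => c * (y ^ (m - k) * (1 - y) ^ S k))).
  { intros y. unfold bern, c. replace (S m - S k)%nat with (m - k)%nat by lia. ring. }
  pose proof (derivable_pt_lim_scal _ c s _
    (derivable_pt_lim_mult _ _ s _ _ (derivable_pt_lim_pow s (m - k))
       (derivable_pt_lim_one_minus_pow (S k) s))) as Hd.
  match type of Hd with derivable_pt_lim _ _ ?l => replace (INR (S m) * _) with l end.
  { exact Hd. }
  unfold bern. replace (m - k)%nat with (S (m - S k)) by lia. simpl pred.
  transitivity (c * INR (S (m - S k)) * s ^ (m - S k) * (1 - s) ^ S k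
                - c * INR (S k) * s ^ S (m - S k) * (1 - s) ^ k).
  { simpl pow. ring. }
  replace (S (m - S k)) with (m - k)%nat by lia. unfold c.
  rewrite binomial_absorb_low, binomial_absorb_high by lia.
  replace (m - k)%nat with (S (m - S k)) by lia. ring.
Qed.

(* Telescoping: the derivative of F_{m+1,k} is (m+1) C(m,k) s^(m-k) (1-s)^k. *)
Lemma bern_cdf_deriv (m k : nat) (s : R) : (k <= m)%nat ->
  derivable_pt_lim (bern_cdf (S m) k) s (INR (S m) * bern m k s).
Proof.
  induction k as [|k IHk]; intros Hk.
  - apply (derivable_pt_lim_ext (bern (S m) 0)); [reflexivity|apply bern_deriv_first].
  - apply (derivable_pt_lim_ext (fun y => bern_cdf (S m) k y + bern (S m) (S k) y)).
    { reflexivity. }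
    replace (INR (S m) * bern m (S k) s)
      with (INR (S m) * bern m k s + INR (S m) * (bern m (S k) s - bern m k s)) by ring.
    apply derivable_pt_lim_plus; [apply IHk; lia|apply bern_deriv_step; lia].
Qed.

Lemma T_deriv (K n : nat) (lam u : R) : (1 <= K)%nat -> (K - 1 <= n)%nat ->
  derivable_pt_lim (T K (S n) lam) u (lam / INR K * INR (S n) * bern_cdf n (K - 1) u).
Proof.
  intros HK Hn.
  apply (derivable_pt_lim_ext (fun y => lam / INR K * sum_f_R0 (fun i => bern_cdf (S n) i y) (K - 1))).
  { intros y. symmetry. apply T_as_cdf_sum. exact HK. }
  rewrite Rmult_assoc. apply derivable_pt_lim_scal.
  replace (INR (S n) * bern_cdf n (K - 1) u)
    with (sum_f_R0 (fun i => INR (S n) * bern n i u) (K - 1))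
    by (unfold bern_cdf; rewrite scal_sum; apply sum_eq; intros; ring).
  apply derivable_pt_lim_sum_f_R0. intros i Hi. apply bern_cdf_deriv. lia.
Qed.

Lemma pow_ge_bernoulli (l : R) (n : nat) : 0 <= l -> 1 - INR n * (1 - l) <= l ^ n.
Proof.
  intros Hl. induction n as [|n IHn]; [simpl; lra|].
  rewrite S_INR. simpl pow. pose proof (pos_INR n).
  assert (l * (1 - INR n * (1 - l)) <= l * l ^ n) by (apply Rmult_le_compat_l; lra).
  assert (0 <= INR n * ((1 - l) * (1 - l))) by (apply Rmult_le_pos; [lra|apply Rle_0_sqr]).
  assert (l * (1 - INR n * (1 - l)) = 1 - (INR n + 1) * (1 - l) + INR n * (1 - l) * (1 - l))
    by ring.
  lra.
Qed.

Lemma one_minus_pow_ge (l : R) (n : nat) : 0 <= l <= 1 -> INR n * (1 - l) * l ^ n <= 1 - l ^ n.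
Proof.
  intros Hl. induction n as [|n IHn]; [simpl; lra|].
  rewrite S_INR. simpl pow. pose proof (pos_INR n).
  assert (0 <= l ^ n) by (apply pow_le; lra).
  assert (Hstep : (INR n + 1) * (1 - l) * (l * l ^ n) <= (INR n + 1) * (1 - l) * l ^ n).
  { apply Rmult_le_compat_l; [apply Rmult_le_pos|]; nra. }
  assert (1 - l * l ^ n = (1 - l ^ n) + (1 - l) * l ^ n) by ring.
  assert ((INR n + 1) * (1 - l) * l ^ n = INR n * (1 - l) * l ^ n + (1 - l) * l ^ n) by ring.
  lra.
Qed.

(* Comparison of the two error terms of cdf_gap_below_1 and cdf_near_1_above. *)
Lemma pow_separation (P e r : R) (n : nat) : 1 <= P -> 0 <= e -> P * P * e <= r ->
  P * e ^ S n <= r ^ S n / P.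
Proof.
  intros HP He Hr.
  assert (Hpow : (P * P * e) ^ S n <= r ^ S n) by (apply pow_incr; split; [nra|exact Hr]).
  rewrite Rpow_mult_distr in Hpow.
  assert (1 <= P * P) by nra.
  assert (P * P <= (P * P) ^ S n) by (simpl; pose proof (pow_R1_Rle (P * P) n); nra).
  assert (0 <= e ^ S n) by (apply pow_le; lra).
  apply (Rmult_le_reg_r P); [lra|].
  replace (r ^ S n / P * P) with (r ^ S n) by (field; lra).
  nra.
Qed.

Lemma mean_slope_decreasing (f f' : R -> R) (u a c : R) :
  (forall t, derivable_pt_lim f t (f' t)) -> f u = u -> c < u ->
  (forall s t, a <= s < t -> t <= u -> s < c -> f' s < f' t) ->
  forall x y, u - c <= x -> x < y -> y <= u - a ->
    (u - f (u - y)) / y < (u - f (u - x)) / x.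
Proof.
  intros Hf Hfix Hcu Hsep x y Hx Hxy Hy.
  destruct (MVT_cor2 f f' (u - y) (u - x)) as [s [Hs Hs_in]]; [lra|intros; apply Hf|].
  destruct (MVT_cor2 f f' (u - x) u) as [t [Ht Ht_in]]; [lra|intros; apply Hf|].
  assert (Hst : f' s < f' t) by (apply Hsep; lra).
  replace (u - f (u - x)) with (f' t * x) by lra.
  replace (u - f (u - y)) with (f' t * x + f' s * (y - x)) by lra.
  replace (f' t * x / x) with (f' t) by (field; lra).
  apply (Rmult_lt_reg_r y); [lra|].
  replace ((f' t * x + f' s * (y - x)) / y * y) with (f' t * x + f' s * (y - x)) by (field; lra).
  assert (0 < (f' t - f' s) * (y - x)) by (apply Rmult_lt_0_compat; lra).
  lra.
Qed.

Definition least_fixpoint_from (f : R -> R) (a u : R) : Prop :=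
  a <= u /\ f u = u /\ (forall v, a <= v < u -> f v <> v).

Lemma least_fixpoint_window (f : R -> R) (a e : R) :
  0 < e -> continuity f -> f a < a -> a + e < f (a + e) ->
  (forall s t, a <= s < t -> t <= a + e -> f s - s < f t - t) ->
  (exists v, least_fixpoint_from f a v) /\
  (forall u, least_fixpoint_from f a u -> u <= a + e).
Proof.
  intros He Hcont Ha Hae Hincr.
  assert (Hg : continuity (fun t => f t - t))
    by exact (continuity_minus f id Hcont (derivable_continuous id derivable_id)).
  destruct (IVT (fun t => f t - t) a (a + e) Hg) as [v [Hv Hfv]]; [lra|lra|lra|].
  assert (Hleast : least_fixpoint_from f a v).
  { split; [lra|]. split; [lra|].
    intros w Hw Hfw. pose proof (Hincr w v ltac:(lra) ltac:(lra)). lra. }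
  split; [exists v; exact Hleast|].
  intros u [Hau [_ Hu]]. destruct (Rle_dec u (a + e)) as [Hle|Hgt]; [exact Hle|].
  exfalso. apply (Hu v); [lra|apply Hleast].
Qed.

(* The numerical heart of the slope estimate on the window: with F >= 1 - 4 A K x and x small,
   (1 - x) D F exceeds K by 3/8 as soon as D >= K + 1. *)
Lemma slope_margin (K D A x F lam : R) : 1 <= K -> K + 1 <= D -> 0 <= A -> 0 <= x ->
  16 * (A + 1) * K ^ 2 * x <= 1 -> lam = 1 - x -> 1 - A * (4 * K * x) <= F ->
  K + 3 / 8 <= lam * D * F.
Proof.
  intros HK HD HA Hx Hsmall Hlam HF. subst lam.
  set (z := (A + 1) * K * x).
  assert (Hz0 : 0 <= z) by (unfold z; apply Rmult_le_pos; [apply Rmult_le_pos|]; lra).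
  assert (HKz : 16 * K * z <= 1) by (unfold z; lra).
  assert (Hz : z <= 1 / 16) by nra.
  assert (Hxz : x <= z).
  { assert (0 <= ((A + 1) * K - 1) * x) by (apply Rmult_le_pos; nra). unfold z. lra. }
  assert (HFz : 1 - 4 * z <= F) by (unfold z in *; nra).
  assert (HlamF : 1 - 5 * z <= (1 - x) * F) by nra.
  assert (HDF : (K + 1) * (1 - 5 * z) <= D * ((1 - x) * F)) by nra.
  nra.
Qed.

Section BernCdf.
Variables m k : nat.

Definition cdf_slope : R := INR (S m) * Binomial.C m k.

Lemma cdf_slope_pos : 0 < cdf_slope.
Proof.
  unfold cdf_slope, Binomial.C.
  pose proof (INR_fact_lt_0 m). pose proof (INR_fact_lt_0 k). pose proof (INR_fact_lt_0 (m - k)).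
  assert (0 < INR (S m)) by (apply lt_0_INR; lia).
  apply Rmult_lt_0_compat; [lra|]. apply Rdiv_lt_0_compat; [lra|nra].
Qed.

Hypothesis Hkm : (k <= m)%nat.

Lemma cdf_deriv (s : R) :
  derivable_pt_lim (bern_cdf (S m) k) s (cdf_slope * (s ^ (m - k) * (1 - s) ^ k)).
Proof.
  replace (cdf_slope * _) with (INR (S m) * bern m k s) by (unfold cdf_slope, bern; ring).
  apply bern_cdf_deriv. exact Hkm.
Qed.

(* F is strictly increasing on [0, 1] (its derivative is positive inside). *)
Lemma cdf_increasing (x y : R) : 0 <= x < y -> y <= 1 -> bern_cdf (S m) k x < bern_cdf (S m) k y.
Proof.
  intros Hx Hy.
  destruct (MVT_cor2 _ _ x y (proj2 Hx) (fun c _ => cdf_deriv c)) as [c [Hc Hc_in]].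
  assert (0 < cdf_slope * (c ^ (m - k) * (1 - c) ^ k) * (y - x)).
  { pose proof cdf_slope_pos.
    apply Rmult_lt_0_compat; [apply Rmult_lt_0_compat; [lra|]|lra].
    apply Rmult_lt_0_compat; apply pow_lt; lra. }
  lra.
Qed.

Lemma cdf_le_1 (x : R) : 0 <= x <= 1 -> bern_cdf (S m) k x <= 1.
Proof.
  intros Hx. rewrite <- (bern_cdf_at_1 (S m) k).
  destruct (Req_dec x 1) as [->|Hne]; [lra|].
  apply Rlt_le, cdf_increasing; lra.
Qed.

(* Below 1, F stays a definite amount under 1: the slope is >= cdf_slope 2^-(m-k) (delta/2)^k
   on [1 - delta, 1 - delta/2]. *)
Lemma cdf_gap_below_1 (delta : R) : 0 < delta <= 1 / 2 ->
  bern_cdf (S m) k (1 - delta) <= 1 - cdf_slope * (delta / 2) ^ S k / 2 ^ (m - k).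
Proof.
  intros Hd.
  destruct (MVT_cor2 _ _ (1 - delta) (1 - delta / 2) ltac:(lra) (fun c _ => cdf_deriv c))
    as [c [Hc Hc_in]].
  assert (Hend : bern_cdf (S m) k (1 - delta / 2) <= 1) by (apply cdf_le_1; lra).
  assert (Hc1 : (/ 2) ^ (m - k) <= c ^ (m - k)) by (apply pow_incr; lra).
  assert (Hc2 : (delta / 2) ^ k <= (1 - c) ^ k) by (apply pow_incr; lra).
  assert (0 <= (/ 2) ^ (m - k)) by (apply pow_le; lra).
  assert (0 <= (delta / 2) ^ k) by (apply pow_le; lra).
  assert (Hprod : (/ 2) ^ (m - k) * (delta / 2) ^ k <= c ^ (m - k) * (1 - c) ^ k)
    by (apply Rmult_le_compat; assumption).
  pose proof cdf_slope_pos.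
  assert (cdf_slope * ((/ 2) ^ (m - k) * (delta / 2) ^ k) * (delta / 2)
          <= cdf_slope * (c ^ (m - k) * (1 - c) ^ k) * (1 - delta / 2 - (1 - delta))).
  { replace (1 - delta / 2 - (1 - delta)) with (delta / 2) by field.
    apply Rmult_le_compat_r; [lra|]. apply Rmult_le_compat_l; lra. }
  assert (cdf_slope * (delta / 2) ^ S k / 2 ^ (m - k)
          = cdf_slope * ((/ 2) ^ (m - k) * (delta / 2) ^ k) * (delta / 2)).
  { rewrite pow_inv. simpl pow. field. apply pow_nonzero. lra. }
  lra.
Qed.

Lemma cdf_near_1_above (e t : R) : 0 <= e <= 1 -> 1 <= t <= 1 + e ->
  1 - cdf_slope * 2 ^ (m - k) * e ^ S k <= bern_cdf (S m) k t.
Proof.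
  intros He Ht.
  destruct (MVT_abs _ _ 1 t (fun c _ => cdf_deriv c)) as [c [Hc Hc_in]].
  rewrite Rmin_left, Rmax_right in Hc_in by lra. rewrite bern_cdf_at_1 in Hc.
  assert (Hbound : Rabs (c ^ (m - k) * (1 - c) ^ k) <= 2 ^ (m - k) * e ^ k).
  { rewrite Rabs_mult, <- !RPow_abs.
    apply Rmult_le_compat; try (apply pow_le, Rabs_pos); apply pow_incr;
      split; try apply Rabs_pos; unfold Rabs; destruct Rcase_abs; lra. }
  pose proof cdf_slope_pos.
  rewrite Rabs_mult, (Rabs_pos_eq cdf_slope), (Rabs_pos_eq (t - 1)) in Hc by lra.
  assert (cdf_slope * Rabs (c ^ (m - k) * (1 - c) ^ k) * (t - 1)
          <= cdf_slope * (2 ^ (m - k) * e ^ k) * e).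
  { apply Rmult_le_compat; try lra.
    - apply Rmult_le_pos; [lra|apply Rabs_pos].
    - apply Rmult_le_compat_l; lra. }
  pose proof (Rle_abs (1 - bern_cdf (S m) k t)).
  rewrite <- Rabs_Ropp in Hc. replace (- (bern_cdf (S m) k t - 1)) with (1 - bern_cdf (S m) k t) in Hc by ring.
  simpl pow. lra.
Qed.

Lemma cdf_separation (delta e s t : R) : 0 < delta <= 1 / 2 -> 0 <= e <= 1 ->
  4 ^ (m - k) * e <= delta / 2 -> 0 <= s < t -> t <= 1 + e -> s < 1 - delta ->
  bern_cdf (S m) k s < bern_cdf (S m) k t.
Proof.
  intros Hd He Hsep Hs Ht Hsd.
  destruct (Rle_dec t 1) as [Ht1|Ht1]; [apply cdf_increasing; lra|].
  assert (Hlow := cdf_near_1_above e t He ltac:(lra)).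
  assert (Hgap := cdf_gap_below_1 delta Hd).
  assert (Hmono : bern_cdf (S m) k s < bern_cdf (S m) k (1 - delta)) by (apply cdf_increasing; lra).
  assert (Hpow : 2 ^ (m - k) * e ^ S k <= (delta / 2) ^ S k / 2 ^ (m - k)).
  { apply pow_separation; [apply pow_R1_Rle; lra|lra|].
    rewrite <- Rpow_mult_distr. replace (2 * 2) with 4 by ring. exact Hsep. }
  pose proof cdf_slope_pos.
  assert (cdf_slope * (2 ^ (m - k) * e ^ S k) <= cdf_slope * ((delta / 2) ^ S k / 2 ^ (m - k)))
    by (apply Rmult_le_compat_l; lra).
  unfold Rdiv in *. lra.
Qed.
End BernCdf.

Section NearCritical.
Variables k m : nat.

Definition exponent : nat := (S k * 4 ^ (m - k) * 16)%nat.

Definition closeness : R :=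
  16 * (cdf_slope m k * 2 ^ (m - k) + 1) * INR (S k) ^ 2 * INR exponent.

Definition threshold : R := 1 - / closeness.

Lemma exponent_INR : INR exponent = INR (S k) * 4 ^ (m - k) * 16.
Proof. unfold exponent. rewrite !mult_INR, pow_INR.
  replace (INR 4) with 4 by (simpl; ring). replace (INR 16) with 16 by (simpl; ring). reflexivity.
Qed.

Lemma exponent_ge_1 : 1 <= INR exponent.
Proof.
  rewrite exponent_INR. pose proof (pow_R1_Rle 4 (m - k) ltac:(lra)).
  assert (1 <= INR (S k)) by (apply (le_INR 1); lia). nra.
Qed.

Lemma closeness_ge_16 : 16 <= closeness.
Proof.
  unfold closeness. rewrite exponent_INR.
  assert (HA : 1 <= cdf_slope m k * 2 ^ (m - k) + 1).
  { pose proof (cdf_slope_pos m k). pose proof (pow_R1_Rle 2 (m - k) ltac:(lra)). nra. }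
  assert (HK : 1 <= INR (S k)) by (apply (le_INR 1); lia).
  assert (HK2 : 1 <= INR (S k) ^ 2) by (apply pow_R1_Rle; lra).
  assert (H4 : 1 <= 4 ^ (m - k)) by (apply pow_R1_Rle; lra).
  set (a := cdf_slope m k * 2 ^ (m - k) + 1) in *.
  set (q := 4 ^ (m - k)) in *. set (K := INR (S k)) in *.
  assert (1 <= K * q) by nra. assert (1 <= a * K ^ 2) by nra. nra.
Qed.

Lemma threshold_lt_1 : threshold < 1.
Proof.
  unfold threshold. pose proof closeness_ge_16.
  assert (0 < / closeness) by (apply Rinv_0_lt_compat; lra). lra.
Qed.

Hypothesis Hkm : (k <= m)%nat.
Variable lam : R.
Hypothesis Hlam : threshold < lam < 1.

Definition T_slope (t : R) : R := lam / INR (S k) * INR (S (S m)) * bern_cdf (S m) k t.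

Lemma T_slope_deriv (t : R) : derivable_pt_lim (T (S k) (S (S m)) lam) t (T_slope t).
Proof.
  unfold T_slope. replace k with (S k - 1)%nat at 3 by lia.
  apply T_deriv; lia.
Qed.

(* The distance x0 of lambda to 1 and the width eta of the window [1, 1 + eta] holding u_lambda. *)
Let K := INR (S k).
Let x0 := 1 - lam.
Let eta := 4 * K * x0.

Lemma x0_small : 0 < x0 /\ x0 * closeness < 1.
Proof.
  unfold x0, threshold in *. pose proof closeness_ge_16. split; [lra|].
  apply (Rmult_lt_reg_r (/ closeness)); [apply Rinv_0_lt_compat; lra|].
  rewrite Rmult_assoc, Rinv_r, Rmult_1_l, Rmult_1_r by lra. lra.
Qed.

Lemma K_ge_1 : 1 <= K.
Proof. unfold K. apply (le_INR 1). lia. Qed.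

(* The constant in cdf_near_1_above. *)
Let A := cdf_slope m k * 2 ^ (m - k).

Lemma A_nonneg : 0 <= A.
Proof. unfold A. pose proof (cdf_slope_pos m k). pose proof (pow_le 2 (m - k) ltac:(lra)). nra. Qed.

Lemma closeness_consequences :
  16 * (A + 1) * K ^ 2 * x0 <= 1 /\ INR exponent * x0 <= 1 / 16 /\ 0 < eta <= 1.
Proof.
  destruct x0_small as [Hx0 Hclose]. pose proof K_ge_1 as HK.
  unfold closeness in Hclose. fold K A in Hclose.
  pose proof exponent_ge_1 as Hb.
  pose proof A_nonneg as HA.
  set (N := 16 * (A + 1) * K ^ 2) in *.
  assert (HN : 16 * K <= N) by (unfold N; simpl; nra).
  assert (HNx : 0 <= N * x0) by nra.
  split; [nra|]. split; [nra|]. unfold eta. split; nra.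
Qed.

Lemma lam_near_1 : 15 / 16 <= lam.
Proof.
  destruct closeness_consequences as [_ [Hbx _]]. destruct x0_small as [Hx0 _].
  pose proof exponent_ge_1. unfold x0 in *. nra.
Qed.

Lemma T_slope_above_1 (t : R) : 1 <= t <= 1 + eta -> 1 + 3 / (8 * K) <= T_slope t.
Proof.
  intros Ht. destruct closeness_consequences as [Hsmall [_ Heta]].
  pose proof K_ge_1 as HK.
  assert (Hnear := cdf_near_1_above m k Hkm eta t ltac:(lra) Ht). fold A in Hnear.
  pose proof A_nonneg as HA.
  assert (Hpow : eta ^ S k <= eta).
  { simpl. pose proof (pow_le eta k ltac:(lra)). pose proof (pow_incr eta 1 k ltac:(lra)).
    rewrite pow1 in *. nra. }
  assert (HF : 1 - A * (4 * K * x0) <= bern_cdf (S m) k t).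
  { fold eta. assert (A * eta ^ S k <= A * eta) by (apply Rmult_le_compat_l; lra). nra. }
  assert (HD : K + 1 <= INR (S (S m))) by (unfold K; rewrite <- S_INR; apply le_INR; lia).
  pose proof (slope_margin K (INR (S (S m))) A x0 _ lam HK HD HA ltac:(unfold x0; lra) Hsmall
    ltac:(unfold x0; ring) HF) as Hmargin.
  unfold T_slope. fold K.
  replace (lam / K * INR (S (S m)) * bern_cdf (S m) k t)
    with ((lam * INR (S (S m)) * bern_cdf (S m) k t) / K) by (field; lra).
  apply (Rmult_le_reg_r K); [lra|].
  replace ((1 + 3 / (8 * K)) * K) with (K + 3 / 8) by (field; lra).
  replace (lam * INR (S (S m)) * bern_cdf (S m) k t / K * K)
    with (lam * INR (S (S m)) * bern_cdf (S m) k t) by (field; lra).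
  exact Hmargin.
Qed.

Lemma T_minus_id_gain (s t : R) : 1 <= s < t -> t <= 1 + eta ->
  3 / (8 * K) * (t - s) <= (T (S k) (S (S m)) lam t - t) - (T (S k) (S (S m)) lam s - s).
Proof.
  intros Hs Ht.
  destruct (MVT_cor2 _ _ s t (proj2 Hs) (fun c _ => T_slope_deriv c)) as [c [Hc Hc_in]].
  pose proof (T_slope_above_1 c ltac:(lra)).
  assert ((1 + 3 / (8 * K)) * (t - s) <= T_slope c * (t - s)) by (apply Rmult_le_compat_r; lra).
  lra.
Qed.

Lemma T_least_fixpoint :
  (exists v, is_min_fixpoint (S k) (S (S m)) lam v) /\
  (forall u, is_min_fixpoint (S k) (S (S m)) lam u -> u <= 1 + eta).
Proof.
  destruct closeness_consequences as [_ [_ Heta]]. pose proof K_ge_1 as HK.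
  assert (Hpos : 0 < 3 / (8 * K)) by (apply Rdiv_lt_0_compat; lra).
  assert (H1 : T (S k) (S (S m)) lam 1 = lam) by (apply T_at_1; lia).
  apply (least_fixpoint_window (T (S k) (S (S m)) lam) 1 eta); [lra| | | |].
  - intros t. apply derivable_continuous_pt. exact (exist _ _ (T_slope_deriv t)).
  - lra.
  - pose proof (T_minus_id_gain 1 (1 + eta) ltac:(lra) ltac:(lra)).
    assert (3 / (8 * K) * (1 + eta - 1) = 3 / 2 * x0) by (unfold eta; field; lra).
    unfold x0 in *. lra.
  - intros s t Hs Ht. pose proof (T_minus_id_gain s t Hs Ht).
    assert (0 < 3 / (8 * K) * (t - s)) by (apply Rmult_lt_0_compat; lra). lra.
Qed.

Lemma exponent_gap :
  1 / 2 <= lam ^ exponent < 1 /\ 4 ^ (m - k) * eta <= (1 - lam ^ exponent) / 2.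
Proof.
  destruct closeness_consequences as [_ [Hbx _]]. destruct x0_small as [Hx0 _].
  pose proof exponent_ge_1 as Hb. pose proof (exponent_INR) as Hbv. fold K in Hbv.
  assert (Hlam0 : 15 / 16 <= lam <= 1) by (pose proof lam_near_1; lra).
  assert (Hhalf : 1 / 2 <= lam ^ exponent)
    by (pose proof (pow_ge_bernoulli lam exponent ltac:(lra)); unfold x0 in Hbx; lra).
  assert (Hdelta : INR exponent * x0 / 2 <= 1 - lam ^ exponent).
  { pose proof (one_minus_pow_ge lam exponent ltac:(lra)).
    assert (INR exponent * x0 * (1 / 2) <= INR exponent * x0 * lam ^ exponent)
      by (apply Rmult_le_compat_l; nra).
    unfold x0 in *. lra. }
  assert (0 < INR exponent * x0) by (apply Rmult_lt_0_compat; lra).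
  unfold eta. rewrite Hbv in Hdelta, H. lra.
Qed.

Lemma T_slope_separation (s t : R) : 0 <= s < t -> t <= 1 + eta -> s < lam ^ exponent ->
  T_slope s < T_slope t.
Proof.
  intros Hs Ht Hsb. destruct closeness_consequences as [_ [_ Heta]].
  destruct exponent_gap as [Hlam_pow Hsep]. pose proof K_ge_1 as HK.
  assert (Hcdf : bern_cdf (S m) k s < bern_cdf (S m) k t)
    by (apply (cdf_separation m k Hkm (1 - lam ^ exponent) eta); lra).
  unfold T_slope. apply Rmult_lt_compat_l; [|exact Hcdf].
  pose proof lam_near_1.
  apply Rmult_lt_0_compat; [apply Rdiv_lt_0_compat; fold K; lra|apply lt_0_INR; lia].
Qed.
End NearCritical.

Theorem lemma3p6 (K d : nat) (HK1 : (1 <= K)%nat) (HKd : (K < d)%nat) :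
  exists lt : R, lt < 1 /\
  exists b : nat,
    forall lam : R, 0 < lam -> lt < lam < 1 ->
      (exists u, is_min_fixpoint K d lam u) /\
      (forall u, is_min_fixpoint K d lam u ->
         forall x y, u - lam ^ b <= x -> x < y -> y <= u ->
           h K d lam u y < h K d lam u x).
Proof.
  destruct K as [|k]; [lia|]. destruct d as [|[|m]]; [lia|lia|].
  assert (Hkm : (k <= m)%nat) by lia.
  exists (threshold k m). split; [apply threshold_lt_1|].
  exists (exponent k m). intros lam _ Hlam.
  destruct (T_least_fixpoint k m Hkm lam Hlam) as [Hexists Hwindow].
  split; [exact Hexists|].
  intros u Hu x y Hx Hxy Hy.
  assert (Hu_window := Hwindow u Hu). destruct Hu as [Hu1 [Hfix _]].
  destruct (exponent_gap k m Hkm lam Hlam) as [Hpow _].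
  unfold h. apply (mean_slope_decreasing _ (T_slope k m lam) u 0 (lam ^ exponent k m));
    [apply T_slope_deriv; assumption|exact Hfix|lra| |lra|exact Hxy|lra].
  intros s t Hs Ht Hsc. apply T_slope_separation; [assumption..|lra|exact Hsc].
Qed.
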